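(* Let $\mathbb{F}$ be a field, let $\mathcal{V} \subseteq \mathbb{F}^{m \times n}$ and $\mathcal{W} \subseteq \mathbb{F}^{m \times n'}$ be rank support spaces, and let $\phi : \mathcal{V} \to \mathcal{W}$ be an $\mathbb{F}$-linear vector space isomorphism. Consider the properties: (P1) there exist full-rank matrices $A \in \mathbb{F}^{m \times m}$ and $B \in \mathbb{F}^{n \times n'}$ such that $\phi(C) = ACB$ for all $C \in \mathcal{V}$; (P2) a subspace $\mathcal{U} \subseteq \mathcal{V}$ is a rank support space if and only if $\phi(\mathcal{U})$ is a rank support space; (P3) for every subspace $\mathcal{D} \subseteq \mathcal{V}$, ${\rm wt_R}(\phi(\mathcal{D})) = {\rm wt_R}(\mathcal{D})$; (P4) ${\rm Rk}(\phi(V)) = {\rm Rk}(V)$ for all $V \in \mathcal{V}$ (i.e. $\phi$ is a rank isometry). Then (P1) $\Leftrightarrow$ (P2) $\Leftrightarrow$ (P3) $\Rightarrow$ (P4). Moreover, in the case $\mathcal{V} = \mathcal{W} = \mathbb{F}^{m \times n}$ (so $n'=n$) and $m \neq n$, (P4) implies (P1) as well.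
   Context: For $C \in \mathbb{F}^{m\times n}$, ${\rm Row}(C) \subseteq \mathbb{F}^n$ is the row space and ${\rm Rk}(C) = \dim {\rm Row}(C)$. For a subspace $\mathcal{D} \subseteq \mathbb{F}^{m \times n}$, its rank support is ${\rm RSupp}(\mathcal{D}) = \sum_{C \in \mathcal{D}} {\rm Row}(C) \subseteq \mathbb{F}^n$ and its rank weight is ${\rm wt_R}(\mathcal{D}) = \dim {\rm RSupp}(\mathcal{D})$. For a subspace $\mathcal{L} \subseteq \mathbb{F}^n$, $\mathcal{V}_\mathcal{L} = \{V \in \mathbb{F}^{m\times n} \mid {\rm Row}(V) \subseteq \mathcal{L}\}$; a rank support space in $\mathbb{F}^{m \times n}$ is a set of the form $\mathcal{V}_\mathcal{L}$ for some subspace $\mathcal{L} \subseteq \mathbb{F}^n$ (analogously in $\mathbb{F}^{m\times n'}$). *)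

From HB Require Import structures.
From mathcomp Require Import all_boot all_order all_algebra.
Set Implicit Arguments. Unset Strict Implicit. Unset Printing Implicit Defensive.
Import GRing.Theory.
Local Open Scope ring_scope.

(* Subspaces of F^n are represented by square matrices L : 'M[F]_n (their row
   space); Row(C) is the row space of C, and (C <= L)%MS is Row(C) ⊆ Row(L). *)

Definition is_rank_support_space (F : fieldType) (m n : nat)
  (U : {vspace 'M[F]_(m, n)}) : Prop :=
  exists L : 'M[F]_n, forall X : 'M[F]_(m, n), (X \in U) = (X <= L)%MS.

(* RSupp(D) = sum over C in D of Row(C); since Row is additive/linear in C,
   this equals the sum over a basis of D. *)
Definition RSupp (F : fieldType) (m n : nat) (D : {vspace 'M[F]_(m, n)})
  : 'M[F]_n :=
  (\sum_(C <- vbasis D) <<C>>)%MS.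

Definition wtR (F : fieldType) (m n : nat) (D : {vspace 'M[F]_(m, n)}) : nat :=
  \rank (RSupp D).

Definition is_iso_on (F : fieldType) (m n n' : nat)
  (V : {vspace 'M[F]_(m, n)}) (W : {vspace 'M[F]_(m, n')})
  (f : 'Hom('M[F]_(m, n), 'M[F]_(m, n'))) : Prop :=
  (lker f :&: V = 0)%VS /\ (f @: V = W)%VS.

Definition P1 (F : fieldType) (m n n' : nat) (V : {vspace 'M[F]_(m, n)})
  (f : 'Hom('M[F]_(m, n), 'M[F]_(m, n'))) : Prop :=
  exists (A : 'M[F]_m) (B : 'M[F]_(n, n')),
    \rank A = m /\ \rank B = minn n n' /\
    forall C, C \in V -> f C = A *m C *m B.

Definition P2 (F : fieldType) (m n n' : nat) (V : {vspace 'M[F]_(m, n)})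
  (f : 'Hom('M[F]_(m, n), 'M[F]_(m, n'))) : Prop :=
  forall U : {vspace 'M[F]_(m, n)}, (U <= V)%VS ->
    (is_rank_support_space U <-> is_rank_support_space (f @: U)%VS).

Definition P3 (F : fieldType) (m n n' : nat) (V : {vspace 'M[F]_(m, n)})
  (f : 'Hom('M[F]_(m, n), 'M[F]_(m, n'))) : Prop :=
  forall D : {vspace 'M[F]_(m, n)}, (D <= V)%VS -> wtR (f @: D)%VS = wtR D.

Definition P4 (F : fieldType) (m n n' : nat) (V : {vspace 'M[F]_(m, n)})
  (f : 'Hom('M[F]_(m, n), 'M[F]_(m, n'))) : Prop :=
  forall C, C \in V -> \rank (f C) = \rank C.

From HB Require Import structures.
From mathcomp Require Import all_boot all_order all_algebra.
From mathcomp Require Import zify.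
Set Implicit Arguments. Unset Strict Implicit. Unset Printing Implicit Defensive.
Import GRing.Theory.
Local Open Scope ring_scope.

(* A rank support space V_L = {C | Row(C) <= L} has dimension m * dim L, and a subspace
   U is one iff dim U = m * wtR U; since f preserves dimensions this gives (P3) -> (P2).
   (P1) -> (P3) because RSupp(A D B) = RSupp(D) B with B injective on L.
   The heart is (P2) -> (P1): by (P2) f maps every line V_x (x in L) into a line V_x',
   so f (c x) = A_x c x' with A_x invertible.  Comparing x, y and x + y for independent
   x, y shows that A_x is a multiple of A_y, so one A serves for all x; then the row
   b(x) with f (c x) = A c b(x) is linear in x, f C = A C B on V_L, and B is modified
   off L into a matrix of full rank.
   For V = W = F^(m x n) with n < m, a rank isometry maps V_x onto an m-dimensional space
   of matrices of rank <= 1.  Such a space lies in a row line or in a column line, and a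
   column line has dimension at most n < m; so lines go to lines again.  The case m < n
   follows by transposition. *)

Section MatrixFacts.
Variable F : fieldType.

Lemma row_mul_col_row m n (p : 'cV[F]_m) (x : 'rV[F]_n) i :
  row i (p *m x) = p i 0 *: x.
Proof. by apply/rowP=> j; rewrite !mxE big_ord1. Qed.

Lemma row_free_rV n (x : 'rV[F]_n) : row_free x = (x != 0).
Proof. by rewrite /row_free rank_rV; case: (x != 0). Qed.

Lemma sub_rV_sym n (x y : 'rV[F]_n) : x != 0 -> (x <= y)%MS -> (y <= x)%MS.
Proof.
by move=> x0 xy; rewrite -(geq_leqif (mxrank_leqif_sup xy)) !rank_rV x0 leq_b1.
Qed.

Lemma unitmx_col_inj n (A : 'M[F]_n) :
  (forall c : 'cV_n, A *m c = 0 -> c = 0) -> A \in unitmx.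
Proof.
move=> Ainj; rewrite -unitmx_tr -row_free_unit -kermx_eq0.
apply/eqP/row_matrixP => i; rewrite row0; apply: trmx_inj; rewrite trmx0.
by apply: Ainj; rewrite -{1}[A]trmxK -trmx_mul -row_mul mulmx_ker row0 trmx0.
Qed.

Lemma lin_colmx m n (g : 'Hom('cV[F]_m, 'cV[F]_n)) :
  exists A : 'M_(n, m), forall c, A *m c = g c.
Proof.
pose h : 'Hom('rV[F]_m, 'rV[F]_n) := (linfun trmx \o g \o linfun trmx)%VF.
exists (lin1_mx h)^T => c.
by rewrite -[c]trmxK -trmx_mul mul_rV_lin1 /= /h !comp_lfunE !lfunE /= !trmxK.
Qed.

Lemma mulmx_col_row k r p (K : 'M[F]_(k, r)) (M : 'M[F]_(r, p)) :
  K *m M = \sum_i col i K *m row i M.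
Proof.
apply/matrixP=> a b; rewrite !mxE summxE; apply: eq_bigr => i _.
by rewrite !mxE big_ord1 !mxE.
Qed.

Lemma rank_le1_mul p q (M : 'M[F]_(p, q)) :
  (\rank M <= 1)%N -> exists (d : 'cV_p) (y : 'rV_q), M = d *m y.
Proof.
move=> rkM; exists (M *m pinvmx (nz_row M)), (nz_row M); rewrite mulmxKpV //.
have [->|M0] := eqVneq M 0; first exact: sub0mx.
rewrite -(geq_leqif (mxrank_leqif_sup (nz_row_sub M))) rank_rV nz_row_eq0 M0.
exact: rkM.
Qed.

Lemma row_free_col_mx2 n (x y : 'rV[F]_n) :
  x != 0 -> ~~ (y <= x)%MS -> row_free (col_mx x y).
Proof.
move=> x0 yx; have rx : \rank x = 1%N by rewrite rank_rV x0.
rewrite /row_free eqn_leq rank_leq_row -addsmxE -{1}rx addn1.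
by rewrite (ltn_leqif (mxrank_leqif_sup (addsmxSl x y))) addsmx_sub submx_refl.
Qed.

Lemma rank_le1_addmul p q (d1 d : 'cV[F]_p) (y1 y : 'rV[F]_q) :
  d1 != 0 -> y1 != 0 -> (\rank (d1 *m y1 + d *m y)%R <= 1)%N ->
  (y <= y1)%MS \/ (d^T <= d1^T)%MS.
Proof.
move=> d10 y10 rk; have [yy1|nyy1] := boolP (y <= y1)%MS; [by left | right].
apply: contraTT rk => ndd; rewrite -ltnNge -mul_row_col mxrankMfree ?row_free_col_mx2 //.
by rewrite -mxrank_tr tr_row_mx (eqP (row_free_col_mx2 _ ndd)) ?trmx_eq0.
Qed.

Lemma mxrank_mul_ker0 k l n p (L : 'M[F]_(l, n)) (S : 'M[F]_(k, n)) (B : 'M_(n, p)) :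
  (L :&: kermx B)%MS = 0 -> (S <= L)%MS -> \rank (S *m B) = \rank S.
Proof.
move=> LB SL; have := mxrank_mul_ker S B.
suff -> : (S :&: kermx B)%MS = 0 by rewrite mxrank0 addn0.
by apply/eqP; rewrite -submx0 -LB capmxS.
Qed.

Lemma max_rank_mulmx_sub p1 p2 n n' (P : 'M[F]_(p1, n)) (Q : 'M[F]_(p2, n')) :
  exists2 G : 'M[F]_(n, n'),
    (P *m G <= Q)%MS & \rank (P *m G) = minn (\rank P) (\rank Q).
Proof.
set s := minn (\rank P) (\rank Q).
have Pn := rank_leq_col P; have Pp := rank_leq_row P; have Qn := rank_leq_col Q.
set G := invmx (row_ebase P) *m pid_mx s *m row_ebase Q.
have PG : P *m G = col_ebase P *m pid_mx s *m row_ebase Q.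
  rewrite -{1}(mulmx_ebase P) !mulmxA mulmxK ?row_ebase_unit //.
  rewrite -(mulmxA _ (pid_mx (\rank P))) mul_pid_mx; congr (_ *m pid_mx _ *m _); lia.
exists G; rewrite PG.
  rewrite -mulmxA mulmx_sub // -(eq_row_base Q) /row_base.
  have -> : (pid_mx s : 'M[F]_(p1, n')) =
            (pid_mx s : 'M[F]_(p1, \rank Q)) *m pid_mx (\rank Q).
    by rewrite mul_pid_mx; congr pid_mx; lia.
  by rewrite -mulmxA submxMl.
rewrite mxrankMfree ?row_free_unit ?row_ebase_unit //.
by rewrite eqmxMfull ?row_full_unit ?col_ebase_unit // rank_pid_mx //; lia.
Qed.

Lemma eqmx_proj_mx n (U V : 'M[F]_n) : (U :&: V = 0)%MS -> (proj_mx U V :=: U)%MS.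
Proof.
move=> UV; apply/eqmxP; rewrite -{1}[proj_mx U V]mul1mx proj_mx_sub /=.
by rewrite -{1}(proj_mx_id UV (submx_refl U)) submxMl.
Qed.

(* [B2] is [B] on [L] and maps the complement [L^C] as injectively as possible into a
   complement of [L *m B]. *)
Lemma full_rank_extension n p (L : 'M[F]_n) (B : 'M[F]_(n, p)) :
  (L :&: kermx B)%MS = 0 ->
  exists2 B2 : 'M[F]_(n, p), \rank B2 = minn n p &
    forall k (X : 'M_(k, n)), (X <= L)%MS -> X *m B2 = X *m B.
Proof.
move=> LB; have LLc := capmx_compl L; have LcL : (L^C :&: L = 0)%MS by rewrite capmxC.
set PL := proj_mx L L^C%MS; set PC := proj_mx L^C%MS L.
have [G PCG rPCG] := max_rank_mulmx_sub PC (L *m B)^C%MS.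
set B2 := PL *m B + PC *m G.
have PLB2 : PL *m B2 = PL *m B.
  rewrite mulmxDr (mulmxA PL PL) (mulmxA PL PC) proj_mx_proj // (proj_mx_0 LcL).
    by rewrite mul0mx addr0.
  by rewrite -[PL]mul1mx proj_mx_sub.
have PCB2 : PC *m B2 = PC *m G.
  rewrite mulmxDr (mulmxA PC PL) (mulmxA PC PC) proj_mx_proj // (proj_mx_0 LLc).
    by rewrite mul0mx add0r.
  by rewrite -[PC]mul1mx proj_mx_sub.
exists B2; last first.
  move=> k X XL; rewrite mulmxDr (mulmxA X PL) (mulmxA X PC).
  by rewrite (proj_mx_id LLc XL) (proj_mx_0 LcL XL) mul0mx addr0.
have B2E : (B2 == PL *m B + PC *m G)%MS.
  by rewrite addmx_sub_adds //= addsmx_sub -{1}PLB2 -{1}PCB2 !submxMl.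
have disj : (PL *m B :&: PC *m G = 0)%MS.
  apply/eqP; rewrite -submx0 -(capmx_compl (L *m B)) capmxS //.
  by rewrite submxMr // -[PL]mul1mx proj_mx_sub.
have rL : \rank (PL *m B) = \rank L.
  by rewrite (eqmxMr B (eqmx_proj_mx LLc)) (mxrank_mul_ker0 LB).
have rPC : \rank PC = (n - \rank L)%N by rewrite (eqmx_proj_mx LcL) mxrank_compl.
have rLBc : \rank (L *m B)^C%MS = (p - \rank L)%N.
  by rewrite mxrank_compl (mxrank_mul_ker0 LB).
have [Ln Lp] : (\rank L <= n)%N /\ (\rank L <= p)%N.
  by rewrite rank_leq_row -(mxrank_mul_ker0 LB (submx_refl L)) rank_leq_col.
rewrite (eqmx_rank B2E) mxrank_disjoint_sum // rL rPCG rPC rLBc; lia.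
Qed.

End MatrixFacts.

Section RankSupportSpaces.
Variables (F : fieldType) (m n : nat).
Implicit Types (D U : {vspace 'M[F]_(m, n)}) (X C : 'M[F]_(m, n)).

Lemma RSupp_ub D X : X \in D -> (X <= RSupp D)%MS.
Proof.
move=> XD; rewrite (coord_vbasis XD) /RSupp big_tuple; apply: summx_sub => i _.
by rewrite scalemx_sub // (sumsmx_sup i) // genmxE (tnth_nth 0).
Qed.

Lemma RSupp_mulmx_sub D p k (B : 'M[F]_(n, p)) (N : 'M[F]_(k, p)) :
  (forall C, C \in vbasis D -> (C *m B <= N)%MS) -> (RSupp D *m B <= N)%MS.
Proof.
move=> sub; rewrite /RSupp big_seq; elim/big_ind: _ => [|A1 A2 s1 s2|C Cb].
- by rewrite mul0mx sub0mx.
- by rewrite (addsmxMr A1 A2 B) addsmx_sub s1 s2.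
- by rewrite (eqmxMr B (genmxE C)) sub.
Qed.

Lemma RSupp_min D k (N : 'M[F]_(k, n)) :
  (forall X, X \in D -> (X <= N)%MS) -> (RSupp D <= N)%MS.
Proof.
move=> sub; rewrite -[RSupp D]mulmx1; apply: RSupp_mulmx_sub => C /vbasis_mem CD.
by rewrite mulmx1 sub.
Qed.

Lemma RSupp_nsub D k (N : 'M[F]_(k, n)) :
  ~~ (RSupp D <= N)%MS -> exists2 X, X \in D & ~~ (X <= N)%MS.
Proof.
move=> nDN; have /allPn [C /vbasis_mem CD nCN] : ~~ all (fun C => C <= N)%MS (vbasis D).
  apply: contra nDN => /allP sub; rewrite -[RSupp D]mulmx1.
  by apply: RSupp_mulmx_sub => C /sub; rewrite mulmx1.
by exists C.
Qed.

Lemma wtR_line C : wtR <[C]>%VS = \rank C.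
Proof.
apply/eqmx_rank/andP; split; last exact/RSupp_ub/memv_line.
by apply: RSupp_min => X /vlineP [k ->]; apply: scalemx_sub.
Qed.

Definition rsspace k (M : 'M[F]_(k, n)) : {vspace 'M[F]_(m, n)} :=
  limg (linfun (mulmxr (row_base M)) : 'Hom('M_(m, \rank M), 'M_(m, n))).

Lemma memv_rsspace k (M : 'M[F]_(k, n)) X : (X \in rsspace M) = (X <= M)%MS.
Proof.
apply/memv_imgP/idP => [[K _ ->]|XM].
  by rewrite lfunE /= -(eq_row_base M) submxMl.
exists (X *m pinvmx (row_base M)); first exact: memvf.
by rewrite lfunE /= mulmxKpV // eq_row_base.
Qed.

Lemma dim_rsspace k (M : 'M[F]_(k, n)) : \dim (rsspace M) = (m * \rank M)%N.
Proof.
rewrite limg_dim_eq ?dimvf ?dim_matrix //; apply/eqP; rewrite -subv0.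
apply/subvP => K; rewrite memv_cap memv_ker lfunE /= memv0 => /andP[_].
by rewrite mulmx_free_eq0 // row_base_free.
Qed.

Lemma rsspace_rss k (M : 'M[F]_(k, n)) : is_rank_support_space (rsspace M).
Proof. by exists <<M>>%MS => X; rewrite memv_rsspace genmxE. Qed.

Lemma rss_rsspace U : is_rank_support_space U -> exists L : 'M[F]_n, U = rsspace L.
Proof. by case=> L UL; exists L; apply/vspaceP => X; rewrite UL memv_rsspace. Qed.

Hypothesis m0 : (0 < m)%N.

Lemma wtR_rsspace k (M : 'M[F]_(k, n)) : wtR (rsspace M) = \rank M.
Proof.
apply/eqmx_rank/andP; split; first by apply: RSupp_min => X; rewrite memv_rsspace.
apply/row_subP => j.
have <- : row (Ordinal m0) (delta_mx (Ordinal m0) 0 *m row j M) = row j M.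
  by rewrite row_mul_col_row mxE !eqxx scale1r.
by rewrite (submx_trans (row_sub _ _)) ?RSupp_ub // memv_rsspace mulmx_sub ?row_sub.
Qed.

Lemma rssP U : is_rank_support_space U <-> \dim U = (m * wtR U)%N.
Proof.
split=> [/rss_rsspace [L ->]|dU]; first by rewrite dim_rsspace wtR_rsspace.
have sub : (U <= rsspace (RSupp U))%VS.
  by apply/subvP => X XU; rewrite memv_rsspace RSupp_ub.
have := dimv_leqif_eq sub; rewrite dim_rsspace -/(wtR U) -dU => /geq_leqif.
by rewrite leqnn => /esym/eqP ->; apply: rsspace_rss.
Qed.

End RankSupportSpaces.

Lemma RSupp_limg (F : fieldType) m n p (f : 'Hom('M[F]_(m, n), 'M[F]_(m, p)))
    (A : 'M[F]_m) (B : 'M[F]_(n, p)) (D : {vspace 'M[F]_(m, n)}) :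
  A \in unitmx -> (forall X, X \in D -> f X = A *m X *m B) ->
  (RSupp (f @: D) == RSupp D *m B)%MS.
Proof.
move=> Au fAB; apply/andP; split.
  apply: RSupp_min => _ /memv_imgP [X XD ->].
  by rewrite fAB // -mulmxA mulmx_sub // submxMr // RSupp_ub.
apply: RSupp_mulmx_sub => C /vbasis_mem CD.
have -> : C *m B = invmx A *m f C by rewrite fAB // -mulmxA mulKmx.
by rewrite mulmx_sub // RSupp_ub // memv_img.
Qed.

Section RankOneSpaces.
Variables (F : fieldType) (p q : nat).
Implicit Type U : {vspace 'M[F]_(p, q)}.

Lemma rank_le1_space U : {in U, forall X, \rank X <= 1}%N ->
  (exists y : 'rV_q, {in U, forall X, X <= y}%MS) \/
  (exists d : 'cV_p, {in U, forall X, X^T <= d^T}%MS).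
Proof.
move=> rk1; have [->|U0] := eqVneq U 0%VS.
  by left; exists 0 => X; rewrite memv0 => /eqP ->; rewrite sub0mx.
have rkD X X' : X \in U -> X' \in U -> (\rank (X + X')%R <= 1)%N.
  by move=> XU X'U; rewrite rk1 ?memvD.
have X1U := memv_pick U; have X10 : vpick U != 0 by rewrite vpick0.
have [d1 [y1 E1]] := rank_le1_mul (rk1 _ X1U).
have d10 : d1 != 0 by apply: contraNneq X10 => d0; rewrite E1 d0 mul0mx.
have y10 : y1 != 0 by apply: contraNneq X10 => y0; rewrite E1 y0 mulmx0.
have [Sy|/RSupp_nsub [X2 X2U nX2]] := boolP (RSupp U <= y1)%MS.
  by left; exists y1 => X XU; apply: submx_trans (RSupp_ub XU) Sy.
have [d2 [y2 E2]] := rank_le1_mul (rk1 _ X2U).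
have ny21 : ~~ (y2 <= y1)%MS by apply: contra nX2 => y21; rewrite E2 mulmx_sub.
have y20 : y2 != 0 by apply: contraNneq ny21 => ->; rewrite sub0mx.
have d20 : d2 != 0 by apply: contraNneq nX2 => d0; rewrite E2 d0 mul0mx sub0mx.
have d21 : (d2^T <= d1^T)%MS.
  have := rkD _ _ X1U X2U; rewrite E1 E2 => /(rank_le1_addmul d10 y10).
  by case=> // y21; case/negP: ny21.
right; exists d1 => X XU; have [d [y EX]] := rank_le1_mul (rk1 _ XU).
rewrite EX trmx_mul; have [->|y0] := eqVneq y 0; first by rewrite trmx0 mul0mx sub0mx.
have := rkD _ _ X1U XU; rewrite E1 EX => /(rank_le1_addmul d10 y10) [yy1|]; last first.
  exact: mulmx_sub.
have := rkD _ _ X2U XU; rewrite E2 EX => /(rank_le1_addmul d20 y20) [yy2|dd2]; last first.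
  exact: mulmx_sub (submx_trans dd2 d21).
by case/negP: ny21; apply: submx_trans (sub_rV_sym y0 yy2) yy1.
Qed.

Lemma dim_col_line U (d : 'cV[F]_p) : {in U, forall X, X^T <= d^T}%MS -> (\dim U <= q)%N.
Proof.
move=> Ud; pose g : 'Hom('rV[F]_q, 'M[F]_(p, q)) := linfun (mulmx d).
have UG : (U <= limg g)%VS.
  apply/subvP => X XU; apply/memv_imgP; exists (X^T *m pinvmx d^T)^T; first exact: memvf.
  by rewrite lfunE /= -[LHS]trmxK -{1}(mulmxKpV (Ud X XU)) trmx_mul trmxK.
apply: leq_trans (dimvS UG) _; have := limg_ker_dim g fullv.
by rewrite dimvf dim_matrix mul1r => dimE; rewrite -[q in (_ <= q)%N]dimE leq_addl.
Qed.

End RankOneSpaces.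

Lemma rank_iso_lker0 (F : fieldType) m n m' n' (f : 'Hom('M[F]_(m, n), 'M[F]_(m', n'))) :
  (forall C, \rank (f C) = \rank C) -> lker f = 0%VS.
Proof.
move=> frk; apply/eqP; rewrite -subv0; apply/subvP => C; rewrite memv_ker memv0.
by rewrite -!mxrank_eq0 frk.
Qed.

Lemma rowline_of_rank_iso (F : fieldType) p n q (f : 'Hom('M[F]_(p, n), 'M[F]_(p, q))) :
  (q < p)%N -> (forall C, \rank (f C) = \rank C) ->
  forall x : 'rV[F]_n, exists x' : 'rV_q, forall c : 'cV_p, (f (c *m x) <= x')%MS.
Proof.
move=> qp frk x; set U := (f @: rsspace p x)%VS.
have rk1 : {in U, forall X, \rank X <= 1}%N.
  move=> X /memv_imgP [C]; rewrite memv_rsspace => Cx ->.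
  by rewrite frk (leq_trans (mxrankS Cx)) ?rank_leq_row.
have [[y Uy]|[d Ud]] := rank_le1_space rk1.
  by exists y => c; apply: Uy; rewrite memv_img // memv_rsspace submxMl.
have [->|x0] := eqVneq x 0; first by exists 0 => c; rewrite mulmx0 linear0 sub0mx.
have := dim_col_line Ud.
by rewrite limg_dim_eq ?rank_iso_lker0 ?capv0 // dim_rsspace rank_rV x0 muln1 leqNgt qp.
Qed.

(* For [0 < m], the linear independence of [x] and [y]. *)
Definition pair_free (F : fieldType) m n (x y : 'rV[F]_n) :=
  forall p q : 'cV[F]_m, p *m x + q *m y = 0 -> p = 0 /\ q = 0.

Lemma pair_free_nsub (F : fieldType) m n (x y : 'rV[F]_n) :
  x != 0 -> ~~ (y <= x)%MS -> pair_free m x y.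
Proof.
move=> x0 yx p q; rewrite -mul_row_col => /eqP.
by rewrite mulmx_free_eq0 ?row_free_col_mx2 // row_mx_eq0 => /andP[/eqP -> /eqP ->].
Qed.

Section PositiveHeight.
Variables (F : fieldType) (m : nat).
Hypothesis m0 : (0 < m)%N.
Let i0 : 'I_m := Ordinal m0.
Let e0 : 'cV[F]_m := delta_mx i0 0.

Lemma row_e0_mul p (b : 'rV[F]_p) : row i0 (e0 *m b) = b.
Proof. by rewrite row_mul_col_row mxE !eqxx scale1r. Qed.

Lemma unitmx_mul_e0_neq0 (A : 'M[F]_m) : A \in unitmx -> A *m e0 != 0.
Proof.
move=> Au; apply/eqP => /(congr1 (mulmx (invmx A))); rewrite mulKmx // mulmx0.
by move/matrixP/(_ i0 0)/eqP; rewrite !mxE !eqxx oner_eq0.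
Qed.

Lemma pair_free_decomp n (x y z : 'rV[F]_n) (P Q R : 'M[F]_m) :
  pair_free m x y -> R \in unitmx ->
  (forall c, R *m c *m z = P *m c *m x + Q *m c *m y) ->
  exists a b : F, forall c : 'cV_m, P *m c = a *: (R *m c) /\ Q *m c = b *: (R *m c).
Proof.
move=> xy Ru E; pose c0 := invmx R *m e0.
pose a := (P *m c0) i0 0; pose b := (Q *m c0) i0 0.
have Ez : z = a *: x + b *: y.
  have := congr1 (row i0) (E c0).
  by rewrite mulKVmx // row_e0_mul linearD /= !row_mul_col_row.
exists a, b => c.
have /xy[/eqP + /eqP] : (P *m c - a *: (R *m c)) *m x + (Q *m c - b *: (R *m c)) *m y = 0.
  rewrite !mulmxBl addrACA -opprD -E Ez mulmxDr -!scalemxAl -!scalemxAr.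
  exact: subrr.
by rewrite !subr_eq0 => /eqP -> /eqP ->.
Qed.

Lemma cap_kermx_eq0 n p (L : 'M[F]_n) (B : 'M[F]_(n, p)) :
  (forall C : 'M[F]_(m, n), (C <= L)%MS -> C *m B = 0 -> C = 0) ->
  (L :&: kermx B)%MS = 0.
Proof.
move=> LB; apply/row_matrixP => i; rewrite row0; set r := row i _.
have rL : (r <= L)%MS by rewrite (submx_trans (row_sub _ _)) ?capmxSl.
have rB : r *m B = 0 by apply/sub_kermxP; rewrite (submx_trans (row_sub _ _)) ?capmxSr.
rewrite -(row_e0_mul r) (LB (e0 *m r)) ?row0 ?mulmx_sub //.
by rewrite -mulmxA rB mulmx0.
Qed.

Section RowLinePreserving.
Variables (n n' : nat) (f : 'Hom('M[F]_(m, n), 'M[F]_(m, n'))) (L : 'M[F]_n).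
Hypothesis f_inj : forall C, (C <= L)%MS -> f C = 0 -> C = 0.
Hypothesis f_rowline : forall x : 'rV[F]_n, (x <= L)%MS ->
  exists x' : 'rV[F]_n', forall c : 'cV[F]_m, (f (c *m x) <= x')%MS.

Lemma rowline_factor x : (x <= L)%MS ->
  exists A (x' : 'rV_n'), A \in unitmx /\ forall c, f (c *m x) = A *m c *m x'.
Proof.
move=> xL; have [->|x0] := eqVneq x 0.
  by exists 1%:M, 0; split=> [|c]; rewrite ?unitmx1 // !mulmx0 linear0.
have [x' fx'] := f_rowline xL.
have [A AE] := lin_colmx (linfun (mulmxr (pinvmx x')) \o f \o linfun (mulmxr x))%VF.
have fx c : f (c *m x) = A *m c *m x' by rewrite AE !comp_lfunE !lfunE /= mulmxKpV.
exists A, x'; split=> //; apply: unitmx_col_inj => c Ac.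
have xfree : row_free x by rewrite row_free_rV.
apply/eqP; rewrite -(mulmx_free_eq0 c xfree); apply/eqP.
by apply: f_inj; rewrite ?mulmx_sub // fx Ac mul0mx.
Qed.

Lemma image_pair_free x y (P Q : 'M[F]_m) (x' y' : 'rV[F]_n') :
  (x <= L)%MS -> (y <= L)%MS -> pair_free m x y ->
  P \in unitmx -> Q \in unitmx ->
  (forall c, f (c *m x) = P *m c *m x') -> (forall c, f (c *m y) = Q *m c *m y') ->
  pair_free m x' y'.
Proof.
move=> xL yL xy Pu Qu fx fy p q E.
have /f_inj : f ((invmx P *m p) *m x + (invmx Q *m q) *m y) = 0.
  by rewrite linearD /= fx fy !mulKVmx.
case/(_ _)/xy => [|Pp Qq]; first by rewrite addmx_sub ?mulmx_sub.
by rewrite -(mulKVmx Pu p) -(mulKVmx Qu q) Pp Qq !mulmx0.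
Qed.

Lemma pair_rowline x y (A : 'M[F]_m) (y' : 'rV[F]_n') :
  (x <= L)%MS -> (y <= L)%MS -> pair_free m y x -> A \in unitmx ->
  (forall c, f (c *m y) = A *m c *m y') ->
  exists b : 'rV_n', forall c, f (c *m x) = A *m c *m b.
Proof.
move=> xL yL yx Au fy.
have [P [x' [Pu fx]]] := rowline_factor xL.
have [R [z' [Ru fz]]] := rowline_factor (addmx_sub yL xL).
have fyx c : R *m c *m z' = A *m c *m y' + P *m c *m x'.
  by rewrite -fz mulmxDr linearD /= fy fx.
have [b [a Eab]] := pair_free_decomp (image_pair_free yL xL yx Au Pu fy fx) Ru fyx.
have b0 : b != 0.
  apply: contraNneq (unitmx_mul_e0_neq0 Au) => b0.
  by have [-> _] := Eab e0; rewrite b0 scale0r.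
exists ((a / b) *: x') => c; have [Ac Pc] := Eab c.
by rewrite fx Pc -(scalemxAl a) -(scalemxAr (a / b)) Ac -(scalemxAl b) scalerA divfK.
Qed.

Lemma rowline_common_factor : exists2 A, A \in unitmx &
  forall x, (x <= L)%MS -> exists b : 'rV_n', forall c, f (c *m x) = A *m c *m b.
Proof.
have [A [y' [Au fy]]] := rowline_factor (nz_row_sub L).
exists A => // x xL; have [/eqP|y0] := eqVneq (nz_row L) 0.
  rewrite nz_row_eq0 => /eqP L0; move: xL; rewrite L0 submx0 => /eqP ->.
  by exists 0 => c; rewrite !mulmx0 linear0.
have [xy|nxy] := boolP (x <= nz_row L)%MS.
  exists (x *m pinvmx (nz_row L) *m y') => c.
  by rewrite -{1}(mulmxKpV xy) mulmxA fy !mulmxA.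
exact: pair_rowline xL (nz_row_sub L) (pair_free_nsub y0 nxy) Au fy.
Qed.

Lemma rowline_mulmx : exists A B, A \in unitmx /\
  forall C, (C <= L)%MS -> f C = A *m C *m B.
Proof.
have [A Au fA] := rowline_common_factor.
(* [f (c *m x) = A *m c *m b] forces [b = row i0 (invmx A *m f (e0 *m x))], which is
   linear in [x]. *)
pose B := lin1_mx (linfun (row i0) \o linfun (mulmx (invmx A)) \o f
                   \o linfun (mulmx e0))%VF.
have fB (x : 'rV_n) : (x <= L)%MS -> forall c : 'cV_m, f (c *m x) = A *m c *m (x *m B).
  move=> xL c; have [b fb] := fA x xL.
  by rewrite fb mul_rV_lin1 /= !comp_lfunE !lfunE /= fb mulmxA mulKmx // row_e0_mul.
exists A, B; split=> // C CL.
rewrite -[C]mul1mx mulmx_col_row linear_sum /= mulmx_sumr mulmx_suml.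
apply: eq_bigr => i _; rewrite fB ?mulmxA //.
exact: submx_trans (row_sub i C) CL.
Qed.

End RowLinePreserving.

Section Characterization.
Variables (n n' : nat) (V : {vspace 'M[F]_(m, n)}) (L : 'M[F]_n).
Variable f : 'Hom('M[F]_(m, n), 'M[F]_(m, n')).
Hypothesis VL : forall X, (X \in V) = (X <= L)%MS.
Hypothesis f_injV : (lker f :&: V = 0)%VS.

Lemma f_inj_on C : (C <= L)%MS -> f C = 0 -> C = 0.
Proof.
by move=> CL fC; apply/eqP; rewrite -memv0 -f_injV memv_cap memv_ker fC VL CL eqxx.
Qed.

Lemma dim_limg_sub U : (U <= V)%VS -> \dim (f @: U) = \dim U.
Proof.
move=> UV; apply: limg_dim_eq; apply/eqP; rewrite -subv0 -f_injV capvC.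
exact: capvS.
Qed.

Lemma cap_kermx_factor A B : (forall C, (C <= L)%MS -> f C = A *m C *m B) ->
  (L :&: kermx B)%MS = 0.
Proof.
move=> fAB; apply: cap_kermx_eq0 => C CL CB; apply: (f_inj_on CL).
by rewrite fAB // -mulmxA CB mulmx0.
Qed.

Lemma P1_P3 : P1 V f -> P3 V f.
Proof.
case=> A [B [rA [_ fAB]]] D DV.
have Au : A \in unitmx by rewrite -row_free_unit /row_free rA.
have fABD X : X \in D -> f X = A *m X *m B by move=> XD; rewrite fAB ?(subvP DV).
have LB : (L :&: kermx B)%MS = 0 by apply: cap_kermx_factor => C; rewrite -VL; apply: fAB.
rewrite /wtR (eqmx_rank (RSupp_limg Au fABD)) (mxrank_mul_ker0 LB) //.
by apply: RSupp_min => X XD; rewrite -VL (subvP DV).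
Qed.

Lemma P3_P4 : P3 V f -> P4 V f.
Proof.
move=> f3 C CV; have CV' : (<[C]> <= V)%VS by rewrite -memvE.
by have := f3 _ CV'; rewrite limg_line !wtR_line.
Qed.

Lemma P3_P2 : P3 V f -> P2 V f.
Proof. by move=> f3 U UV; rewrite !(rssP m0) dim_limg_sub // f3. Qed.

Lemma rowline_of_P2 : P2 V f -> forall x : 'rV[F]_n, (x <= L)%MS ->
  exists x' : 'rV[F]_n', forall c : 'cV[F]_m, (f (c *m x) <= x')%MS.
Proof.
move=> f2 x xL.
have xV : (rsspace m x <= V)%VS.
  by apply/subvP => X; rewrite memv_rsspace VL => /submx_trans; apply.
have [M EM] := rss_rsspace ((f2 _ xV).1 (rsspace_rss m x)).
have /rank_le1_mul [d [y My]] : (\rank M <= 1)%N.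
  have := dim_limg_sub xV; rewrite EM !dim_rsspace => /eqP.
  by rewrite eqn_pmul2l // => /eqP ->; apply: rank_leq_row.
exists y => c; have : c *m x \in rsspace m x by rewrite memv_rsspace submxMl.
by move/(memv_img f); rewrite EM memv_rsspace My => /submx_trans; apply; rewrite submxMl.
Qed.

Lemma P2_P1 : P2 V f -> P1 V f.
Proof.
move=> /rowline_of_P2 f_rowline.
have [A [B [Au fAB]]] := rowline_mulmx f_inj_on f_rowline.
have [B2 rB2 B2B] := full_rank_extension (cap_kermx_factor fAB).
exists A, B2; split; first exact: mxrank_unit.
by split=> // C; rewrite VL => CL; rewrite fAB // -!mulmxA B2B.
Qed.

End Characterization.

End PositiveHeight.

Section Square.
Variable F : fieldType.

Lemma P4_P1_tall m n (f : 'Hom('M[F]_(m, n), 'M[F]_(m, n))) :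
  (n < m)%N -> P4 fullv f -> P1 fullv f.
Proof.
move=> nm f4; have m0 : (0 < m)%N by apply: leq_ltn_trans nm.
have frk C : \rank (f C) = \rank C by rewrite f4 ?memvf.
have finj C : f C = 0 -> C = 0.
  by move=> fC; apply/eqP; rewrite -mxrank_eq0 -frk fC mxrank0.
have [A [B [Au fAB]]] := rowline_mulmx m0 (L := 1%:M) (fun C _ => finj C)
  (fun x _ => rowline_of_rank_iso nm frk x).
have : (1%:M :&: kermx B)%MS = 0.
  apply: (cap_kermx_eq0 m0) => C _ CB; apply: finj.
  by rewrite fAB ?submx1 // -mulmxA CB mulmx0.
rewrite cap1mx => /eqP; rewrite kermx_eq0 => /eqP rB.
exists A, B; rewrite minnn; split; [exact: mxrank_unit | split=> // C _].
by rewrite fAB ?submx1.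
Qed.

Lemma P4_P1_wide m n (f : 'Hom('M[F]_(m, n), 'M[F]_(m, n))) :
  (m < n)%N -> P4 fullv f -> P1 fullv f.
Proof.
move=> mn f4.
pose g : 'Hom('M[F]_(n, m), 'M[F]_(n, m)) := (linfun trmx \o f \o linfun trmx)%VF.
have gE Y : g Y = (f Y^T)^T by rewrite !comp_lfunE !lfunE.
have g4 : P4 fullv g by move=> Y _; rewrite gE mxrank_tr f4 ?memvf // mxrank_tr.
have [A [B [rA [rB gAB]]]] := P4_P1_tall mn g4.
exists B^T, A^T; rewrite !mxrank_tr rB rA !minnn; split=> //; split=> // C _.
by rewrite -[C]trmxK -[f _]trmxK -gE gAB ?memvf // !trmx_mul trmxK mulmxA.
Qed.

End Square.

Section NoRows.
Variables (F : fieldType) (n n' : nat).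

Lemma rss_flatmx k (U : {vspace 'M[F]_(0, k)}) : is_rank_support_space U.
Proof. by exists 0 => X; rewrite [X]flatmx0 mem0v sub0mx. Qed.

Lemma wtR_flatmx k (D : {vspace 'M[F]_(0, k)}) : wtR D = 0%N.
Proof.
apply/eqP; rewrite mxrank_eq0 -submx0.
by apply: RSupp_min => X _; rewrite [X]flatmx0 sub0mx.
Qed.

Lemma props_flatmx (V : {vspace 'M[F]_(0, n)}) (f : 'Hom('M[F]_(0, n), 'M[F]_(0, n'))) :
  [/\ P1 V f, P2 V f, P3 V f & P4 V f].
Proof.
split.
- exists 1%:M, (pid_mx (minn n n')); rewrite mxrank1 rank_pid_mx ?geq_minl ?geq_minr //.
  by split=> //; split=> // C _; rewrite [LHS]flatmx0 [RHS]flatmx0.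
- by move=> U _; split=> _; apply: rss_flatmx.
- by move=> D _; rewrite !wtR_flatmx.
- by move=> C _; rewrite [f C]flatmx0 [C]flatmx0 !mxrank0.
Qed.

End NoRows.

Theorem theorem4 (F : fieldType) (m n n' : nat) :
  (forall (V : {vspace 'M[F]_(m, n)}) (W : {vspace 'M[F]_(m, n')})
          (f : 'Hom('M[F]_(m, n), 'M[F]_(m, n'))),
      is_rank_support_space V -> is_rank_support_space W ->
      is_iso_on V W f ->
      (P1 V f <-> P2 V f) /\ (P2 V f <-> P3 V f) /\ (P3 V f -> P4 V f)) /\
  (forall f : 'Hom('M[F]_(m, n), 'M[F]_(m, n)),
      is_iso_on fullv fullv f -> m != n ->
      P4 fullv f -> P1 fullv f).
Proof.
split=> [|f _]; last first.
  by case: (ltngtP m n) => [mn _|nm _|[]]; [apply: P4_P1_wide | apply: P4_P1_tall | ].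
have [-> V W f _ _ _|m0 V W f [L VL] _ [f_inj _]] := posnP m.
  by have [f1 f2 f3 f4] := props_flatmx V f.
have P13 := P1_P3 m0 VL f_inj; have P32 := P3_P2 m0 f_inj.
have P21 := P2_P1 m0 VL f_inj.
split; first by split=> [/P13/P32|/P21].
split; first by split=> [/P21/P13|/P32].
exact: P3_P4.
Qed.
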